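(* Let $C$ be a small 2-category in which every 2-cell is invertible, let $n\ge 2$ and $1\le k\le n-1$. Then the square with maps $N^{k-1}_nC\to N^k_nC$ (restriction), $N^{k-1}_nC\to C_2$ ($u\mapsto u_{n,k,k-1}$), $\phi^k_n\colon N^k_nC\to C_1$, $\phi^k_n(u)=u_{n,k}\circ u_{k,k-1}$, and the target map $t\colon C_2\to C_1$ is a set-theoretic pullback; that is, the induced map $N^{k-1}_nC\to N^k_nC\times_{C_1}C_2$ is a bijection.
   Context: The nerve $NC$ of a 2-category $C$ is the simplicial set whose $n$-simplices are normal lax functors $[n]\dashrightarrow C$ (where $[n]=\{0<\dots<n\}$ is viewed as a 2-category with only identity 2-cells), with simplicial operators given by precomposition. Concretely an $n$-simplex $u$ is given by objects $u_i$, arrows $u_{j,i}\colon u_i\to u_j$ for $i<j$ (with $u_{i,i}=\mathrm{id}$), and 2-cells $u_{l,j,i}\colon u_{l,i}\Rightarrow u_{l,j}\circ u_{j,i}$ for $i<j<l$ (identities when two indices coincide), such that for each $i<j<k<l$: $(u_{l,k}\circ u_{k,j,i})\bullet u_{l,k,i}=(u_{l,k,j}\circ u_{j,i})\bullet u_{l,j,i}$. Simplices of $\Delta^n$ are order-preserving maps $a\colon[m]\to[n]$. For $0\le k\le n-1$ let $F_k\Delta^n\subset\Delta^n$ be the simplicial subset of those $a\colon[m]\to[n]$ with $a(m)<n$ or $a(0)\ge k$ (so $F_0\Delta^n=\Delta^n$; it is the union of the face $d_n\Delta^n\cong\Delta^{n-1}$ with the face spanned by vertices $k,\dots,n$), and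 let $N^k_nC$ be the set of simplicial maps $F_k\Delta^n\to NC$; thus $N^0_nC=NC_n$ and restriction gives maps $N^{k-1}_nC\to N^k_nC$. For $u\in N^k_nC$ we use the notation $u_i,u_{j,i},u_{l,j,i}$ for the images of the vertices, edges and triangles contained in $F_k\Delta^n$. $C_1$, $C_2$ denote the sets of arrows and 2-cells, and $t$ the target of 2-cells. *)

From mathcomp Require Import all_boot.
Set Implicit Arguments. Unset Strict Implicit. Unset Printing Implicit Defensive.

(* Strict (small) 2-categories, presented "set-theoretically":         *)
(* objects, arrows (C_1) and 2-cells (C_2) with source/target maps and *)
(* composition operations; the axioms are required on composable data. *)
(*   comp g f   = g o f           (f : a -> b, g : b -> c)             *)
(*   vcomp b a  = b . a (vertical) (a : f => g, b : g => h)            *)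
(*   hcomp b a  = b o a (horizontal)                                   *)
Record TwoCat := {
  Ob : Type; Ar : Type; Cell : Type;
  src : Ar -> Ob; tgt : Ar -> Ob; id1 : Ob -> Ar; comp : Ar -> Ar -> Ar;
  s2 : Cell -> Ar; t2 : Cell -> Ar; id2 : Ar -> Cell;
  vcomp : Cell -> Cell -> Cell; hcomp : Cell -> Cell -> Cell;
  src_id1 : forall a, src (id1 a) = a;
  tgt_id1 : forall a, tgt (id1 a) = a;
  src_comp : forall g f, src g = tgt f -> src (comp g f) = src f;
  tgt_comp : forall g f, src g = tgt f -> tgt (comp g f) = tgt g;
  comp_id1r : forall f, comp f (id1 (src f)) = f;
  comp_id1l : forall f, comp (id1 (tgt f)) f = f;
  compA : forall h g f, src h = tgt g -> src g = tgt f ->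
    comp h (comp g f) = comp (comp h g) f;
  src_s2t2 : forall a, src (s2 a) = src (t2 a);
  tgt_s2t2 : forall a, tgt (s2 a) = tgt (t2 a);
  s2_id2 : forall f, s2 (id2 f) = f;
  t2_id2 : forall f, t2 (id2 f) = f;
  s2_vcomp : forall b a, s2 b = t2 a -> s2 (vcomp b a) = s2 a;
  t2_vcomp : forall b a, s2 b = t2 a -> t2 (vcomp b a) = t2 b;
  vcomp_id2r : forall a, vcomp a (id2 (s2 a)) = a;
  vcomp_id2l : forall a, vcomp (id2 (t2 a)) a = a;
  vcompA : forall c b a, s2 c = t2 b -> s2 b = t2 a ->
    vcomp c (vcomp b a) = vcomp (vcomp c b) a;
  s2_hcomp : forall b a, src (s2 b) = tgt (s2 a) ->
    s2 (hcomp b a) = comp (s2 b) (s2 a);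
  t2_hcomp : forall b a, src (s2 b) = tgt (s2 a) ->
    t2 (hcomp b a) = comp (t2 b) (t2 a);
  hcomp_id1r : forall a, hcomp a (id2 (id1 (src (s2 a)))) = a;
  hcomp_id1l : forall a, hcomp (id2 (id1 (tgt (s2 a)))) a = a;
  hcompA : forall c b a, src (s2 c) = tgt (s2 b) -> src (s2 b) = tgt (s2 a) ->
    hcomp c (hcomp b a) = hcomp (hcomp c b) a;
  hcomp_id2 : forall g f, src g = tgt f -> hcomp (id2 g) (id2 f) = id2 (comp g f);
  interchange : forall b' b a' a, s2 b' = t2 b -> s2 a' = t2 a ->
    src (s2 b) = tgt (s2 a) ->
    hcomp (vcomp b' b) (vcomp a' a) = vcomp (hcomp b' a') (hcomp b a)
}.

Arguments src {_}. Arguments tgt {_}. Arguments id1 {_}. Arguments comp {_}.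
Arguments s2 {_}. Arguments t2 {_}. Arguments id2 {_}.
Arguments vcomp {_}. Arguments hcomp {_}.

Definition cells_invertible (C : TwoCat) : Prop :=
  forall a : Cell C, exists b : Cell C,
    [/\ s2 b = t2 a, t2 b = s2 a, vcomp b a = id2 (s2 a) & vcomp a b = id2 (t2 a)].

(* The nerve NC.  An m-simplex is a normal lax functor [m] -> C, given *)
(* by u_i (sob), u_{j,i} (sar j i) and u_{l,j,i} (scl l j i).          *)
(* Values at non-meaningful index triples (not i <= j, resp. not       *)
(* i <= j <= l) are fixed to canonical "junk" values so that the data  *)
(* of a simplex is exactly the data of a normal lax functor.           *)
Record sdata (C : TwoCat) (m : nat) := SData {
  sob : 'I_m.+1 -> Ob C;
  sar : 'I_m.+1 -> 'I_m.+1 -> Ar C;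
  scl : 'I_m.+1 -> 'I_m.+1 -> 'I_m.+1 -> Cell C }.

Definition is_simplex (C : TwoCat) (m : nat) (u : sdata C m) : Prop :=
  (forall i j : 'I_m.+1, i <= j ->
        src (sar u j i) = sob u i /\ tgt (sar u j i) = sob u j) /\
  (forall i : 'I_m.+1, sar u i i = id1 (sob u i)) /\
  (forall i j l : 'I_m.+1, i <= j -> j <= l ->
        s2 (scl u l j i) = sar u l i /\
        t2 (scl u l j i) = comp (sar u l j) (sar u j i)) /\
  (forall i j l : 'I_m.+1, i <= j -> j <= l -> (i = j \/ j = l) ->
        scl u l j i = id2 (sar u l i)) /\
  (forall i j k l : 'I_m.+1, i < j -> j < k -> k < l ->
        vcomp (hcomp (id2 (sar u l k)) (scl u k j i)) (scl u l k i) =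
        vcomp (hcomp (scl u l k j) (id2 (sar u j i))) (scl u l j i)) /\
      (forall i j : 'I_m.+1, j < i -> sar u j i = id1 (sob u i)) /\
      (forall i j l : 'I_m.+1, ~~ ((i <= j) && (j <= l)) ->
         scl u l j i = id2 (id1 (sob u i))).

Definition mono (m n : nat) :=
  {f : 'I_m.+1 -> 'I_n.+1 | forall i j : 'I_m.+1, i <= j -> f i <= f j}.

Definition mcomp (m' m n : nat) (a : mono m n) (b : mono m' m) : mono m' n :=
  @exist _ (fun f : 'I_m'.+1 -> 'I_n.+1 => forall i j : 'I_m'.+1, i <= j -> f i <= f j)
    (fun i => sval a (sval b i))
    (fun i j h => proj2_sig a _ _ (proj2_sig b _ _ h)).

Definition restr (C : TwoCat) (m m' : nat) (u : sdata C m) (b : mono m' m)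
  : sdata C m' :=
  SData (fun i => sob u (sval b i))
    (fun j i => if i <= j then sar u (sval b j) (sval b i)
                else id1 (sob u (sval b i)))
    (fun l j i => if (i <= j) && (j <= l)
                  then scl u (sval b l) (sval b j) (sval b i)
                  else id2 (id1 (sob u (sval b i)))).

Definition inF (n k m : nat) (a : mono m n) : bool :=
  (sval a ord_max < n) || (k <= sval a ord0).

(* N^k_n C : simplicial maps F_k Delta^n -> NC *)
Record nerve_map (C : TwoCat) (n k : nat) := NMap {
  nm : forall m (a : mono m n), inF k a -> sdata C m;
  nm_simplex : forall m (a : mono m n) (Ha : inF k a), is_simplex (nm Ha);
  nm_nat : forall m m' (a : mono m n) (b : mono m' m)
    (Ha : inF k a) (Hab : inF k (mcomp a b)),
    nm Hab = restr (nm Ha) b }.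

Lemma inF_pred (n k m : nat) (a : mono m n) : inF k a -> inF k.-1 a.
Proof.
rewrite /inF => /orP [->|h] //; apply/orP; right.
exact: leq_trans (leq_pred k) h.
Qed.

Definition resK (C : TwoCat) (n k : nat) (u : nerve_map C n k.-1)
  : nerve_map C n k :=
  @NMap C n k (fun m a Ha => nm u (inF_pred Ha))
    (fun m a Ha => nm_simplex u (inF_pred Ha))
    (fun m m' a b Ha Hab => @nm_nat C n k.-1 u m m' a b (inF_pred Ha) (inF_pred Hab)).

Definition edge (n : nat) (i j : 'I_n.+1) (h : i <= j) : mono 1 n.
Proof.
exists (fun t : 'I_2 => if val t is 0 then i else j).
move=> [[|[|s]] Hs] [[|[|t]] Ht] //= H; by rewrite ?leqnn.
Defined.

Definition tri (n : nat) (i j l : 'I_n.+1) (h1 : i <= j) (h2 : j <= l)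
  : mono 2 n.
Proof.
exists (fun t : 'I_3 => match val t with 0 => i | 1 => j | _ => l end).
move=> [[|[|[|s]]] Hs] [[|[|[|t]]] Ht] //= H; rewrite ?leqnn //.
exact: leq_trans h1 h2.
Defined.

(* the vertices k-1, k, n of Delta^n, for k : 'I_n (i.e. k <= n-1) *)
Definition vk (n : nat) (k : 'I_n) : 'I_n.+1 := Ordinal (leqW (ltn_ord k)).
Definition vkm1 (n : nat) (k : 'I_n) : 'I_n.+1 :=
  Ordinal (leq_ltn_trans (leq_pred k) (leqW (ltn_ord k))).
Definition vn (n : nat) : 'I_n.+1 := ord_max.

Lemma le_km1_k (n : nat) (k : 'I_n) : vkm1 k <= vk k.
Proof. exact: leq_pred. Qed.
Lemma le_k_n (n : nat) (k : 'I_n) : vk k <= vn n.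
Proof. exact: ltnW (ltn_ord k). Qed.

Definition tri_kn (n : nat) (k : 'I_n) : mono 2 n :=
  tri (le_km1_k k) (le_k_n k).
Definition edge_kn (n : nat) (k : 'I_n) : mono 1 n := edge (le_k_n k).
Definition edge_km1k (n : nat) (k : 'I_n) : mono 1 n := edge (le_km1_k k).

Lemma tri_kn_in (n : nat) (k : 'I_n) : inF k.-1 (tri_kn k).
Proof. by rewrite /inF /= leqnn orbT. Qed.
Lemma edge_kn_in (n : nat) (k : 'I_n) : inF k (edge_kn k).
Proof. by rewrite /inF /= leqnn orbT. Qed.
Lemma edge_km1k_in (n : nat) (k : 'I_n) : inF k (edge_km1k k).
Proof. by rewrite /inF /= ltn_ord. Qed.

Definition o3_0 : 'I_3 := ord0.
Definition o3_1 : 'I_3 := Ordinal (isT : 1 < 3).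
Definition o3_2 : 'I_3 := ord_max.
Definition o2_0 : 'I_2 := ord0.
Definition o2_1 : 'I_2 := ord_max.

Definition cell_nkkm1 (C : TwoCat) (n : nat) (k : 'I_n)
  (u : nerve_map C n k.-1) : Cell C :=
  scl (nm u (tri_kn_in k)) o3_2 o3_1 o3_0.

Definition phi (C : TwoCat) (n : nat) (k : 'I_n) (u : nerve_map C n k) : Ar C :=
  comp (sar (nm u (edge_kn_in k)) o2_1 o2_0)
       (sar (nm u (edge_km1k_in k)) o2_1 o2_0).

(* A simplicial map F_j Delta^n -> NC is the same thing as its values on the
   vertices, edges and triangles of F_j Delta^n satisfying the axioms of a normal
   lax functor ([is_lax_skeleton]).  The simplices of F_{k-1} Delta^n that are not
   in F_k Delta^n are those with first vertex k-1 and last vertex n, so extending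
   v in N^k_n C by u_{n,k,k-1} = x amounts to choosing the edge u_{n,k-1}, which
   must be the source of x, and the cells u_{n,q,k-1}: identities for q = k-1, n,
   x itself for q = k, and for k < q < n the cocycle condition on (k-1,k,q,n)
   forces
     u_{n,q,k-1} = (u_{n,q} o u_{q,k,k-1})^-1 . (u_{n,q,k} o u_{k,k-1}) . x,
   which gives uniqueness.  With this choice the remaining cocycle conditions, on
   (k-1,q,r,n) with k < q < r < n, follow from those on (k-1,k,q,r), (k,q,r,n),
   (k-1,k,q,n) and (k-1,k,r,n) after cancelling the invertible cell
   u_{n,r} o u_{r,q} o u_{q,k,k-1}. *)

From mathcomp Require Import all_boot zify.
From Stdlib Require Import FunctionalExtensionality ProofIrrelevance IndefiniteDescription.
Set Implicit Arguments. Unset Strict Implicit. Unset Printing Implicit Defensive.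

Lemma mono_eq m n (a b : mono m n) : sval a =1 sval b -> a = b.
Proof.
case: a b => [f hf] [g hg] /= /functional_extensionality efg; subst g.
by rewrite (proof_irrelevance _ hf hg).
Qed.

Definition monob m n (f : 'I_m.+1 -> 'I_n.+1) : bool :=
  [forall i : 'I_m.+1, forall j : 'I_m.+1, (i <= j) ==> (f i <= f j)].

Lemma monobP m n (f : 'I_m.+1 -> 'I_n.+1) :
  reflect (forall i j : 'I_m.+1, i <= j -> f i <= f j) (monob f).
Proof.
apply: (iffP forallP) => H.
  by move=> i j hij; move/forallP: (H i) => /(_ j) /implyP; apply.
by move=> i; apply/forallP => j; apply/implyP; apply: H.
Qed.

(* A non-monotone [f] is sent to the constant map at [0]. *)
Definition mkm m n (f : 'I_m.+1 -> 'I_n.+1) : mono m n :=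
  match monobP f with
  | ReflectT H => exist _ f H
  | ReflectF _ => @exist _ (fun g : 'I_m.+1 -> 'I_n.+1 =>
                     forall i j : 'I_m.+1, i <= j -> g i <= g j)
                   (fun _ => ord0) (fun _ _ _ => leqnn 0)
  end.

Lemma mkmE m n (f : 'I_m.+1 -> 'I_n.+1) :
  (forall i j : 'I_m.+1, i <= j -> f i <= f j) -> sval (mkm f) = f.
Proof. by rewrite /mkm => H; case: monobP. Qed.

Definition edge_fun T (p q : T) (t : 'I_2) : T := if val t == 0 then p else q.
Definition tri_fun T (p q r : T) (t : 'I_3) : T :=
  if val t == 0 then p else if val t == 1 then q else r.
Definition tet_fun T (p q r s : T) (t : 'I_4) : T :=
  if val t == 0 then p else if val t == 1 then q else if val t == 2 then r else s.

Lemma edge_fun_mono N (p q : 'I_N) : p <= q ->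
  forall s t : 'I_2, s <= t -> edge_fun p q s <= edge_fun p q t.
Proof. by move=> h [[|[|?]] ?] [[|[|?]] ?]. Qed.

Lemma tri_fun_mono N (p q r : 'I_N) : p <= q -> q <= r ->
  forall s t : 'I_3, s <= t -> tri_fun p q r s <= tri_fun p q r t.
Proof. move=> h1 h2 [[|[|[|?]]] ?] [[|[|[|?]]] ?] //= _; rewrite /tri_fun /=; lia. Qed.

Lemma tet_fun_mono N (p q r s : 'I_N) : p <= q -> q <= r -> r <= s ->
  forall x y : 'I_4, x <= y -> tet_fun p q r s x <= tet_fun p q r s y.
Proof.
move=> h1 h2 h3 [[|[|[|[|?]]]] ?] [[|[|[|[|?]]]] ?] //= _; rewrite /tet_fun /=; lia.
Qed.

Lemma nerve_map_eq C n j (u v : nerve_map C n j) :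
  (forall m (a : mono m n) (Ha : inF j a), nm u Ha = nm v Ha) -> u = v.
Proof.
case: u v => [nu su tu] [nv sv tv] /= e.
have E : nu = nv.
  do 3 apply: functional_extensionality_dep => ?; exact: e.
subst nv; by rewrite (proof_irrelevance _ su sv) (proof_irrelevance _ tu tv).
Qed.

(* [spanF j p s] says that the simplices of [Delta^n] with first vertex [p]
   and last vertex [s] lie in [F_j Delta^n]. *)
Definition spanF (n j : nat) (p s : 'I_n.+1) : bool := (s < n) || (j <= p).

Lemma spanFW n j (p s p' s' : 'I_n.+1) :
  spanF j p s -> p <= p' -> s' <= s -> spanF j p' s'.
Proof. rewrite /spanF; lia. Qed.

Lemma spanF_mono n j m (a : mono m n) (i i' : 'I_m.+1) : inF j a -> i <= i' ->
  spanF j (sval a i) (sval a i').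
Proof.
move=> Ha hi; apply: spanFW Ha _ _; apply: (proj2_sig a) => //; exact: leq_ord.
Qed.

Lemma inF_mcomp n j m m' (a : mono m n) (b : mono m' m) :
  inF j a -> inF j (mcomp a b).
Proof. by move=> Ha; apply: spanF_mono Ha _; apply: (proj2_sig b). Qed.

Lemma inF_mkm n j m (f : 'I_m.+1 -> 'I_n.+1) :
  (forall i i' : 'I_m.+1, i <= i' -> f i <= f i') -> spanF j (f ord0) (f ord_max) ->
  inF j (mkm f).
Proof. by move=> fm; rewrite /inF mkmE. Qed.

Definition cocycle (C : TwoCat) (I : Type) (A : I -> I -> Ar C)
    (T : I -> I -> I -> Cell C) (p q r s : I) : Prop :=
  vcomp (hcomp (id2 (A s r)) (T r q p)) (T s r p) =
  vcomp (hcomp (T s r q) (id2 (A q p))) (T s q p).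

Section LaxSkeleton.
Variables (C : TwoCat) (n j : nat).
Variables (O : 'I_n.+1 -> Ob C) (A : 'I_n.+1 -> 'I_n.+1 -> Ar C)
  (T : 'I_n.+1 -> 'I_n.+1 -> 'I_n.+1 -> Cell C).

Definition of_skel m (f : 'I_m.+1 -> 'I_n.+1) : sdata C m :=
  SData (fun i => O (f i))
    (fun i' i => if i <= i' then A (f i') (f i) else id1 (O (f i)))
    (fun l i' i => if (i <= i') && (i' <= l) then T (f l) (f i') (f i)
                  else id2 (id1 (O (f i)))).

Record is_lax_skeleton : Prop := LaxSkeleton {
  lax_arrow : forall p q : 'I_n.+1, p <= q -> spanF j p q ->
    src (A q p) = O p /\ tgt (A q p) = O q;
  lax_unit : forall p : 'I_n.+1, A p p = id1 (O p);
  lax_cell : forall p q r : 'I_n.+1, p <= q -> q <= r -> spanF j p r ->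
    s2 (T r q p) = A r p /\ t2 (T r q p) = comp (A r q) (A q p);
  lax_normal : forall p q r : 'I_n.+1, p <= q -> q <= r -> spanF j p r -> (p = q \/ q = r) ->
    T r q p = id2 (A r p);
  lax_cocycle : forall p q r s : 'I_n.+1, p < q -> q < r -> r < s -> spanF j p s ->
    cocycle A T p q r s }.

Hypothesis HL : is_lax_skeleton.

Lemma lax_cocycle_le (p q r s : 'I_n.+1) : p <= q -> q <= r -> r <= s -> spanF j p s ->
  cocycle A T p q r s.
Proof.
move=> h1 h2 h3 hF.
have h12 := leq_trans h1 h2; have h23 := leq_trans h2 h3.
have Fpr : spanF j p r := spanFW hF (leqnn p) h3.
have Fqs : spanF j q s := spanFW hF h1 (leqnn s).
have Fpq : spanF j p q := spanFW hF (leqnn p) h23.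
have Fqr : spanF j q r := spanFW hF h1 h3.
have Frs : spanF j r s := spanFW hF h12 (leqnn s).
rewrite /cocycle; case: (eqVneq p q) => [epq|npq].
  subst q; rewrite (lax_normal HL (leqnn p) h2 Fpr (or_introl erefl)).
  rewrite (lax_normal HL (leqnn p) h23 hF (or_introl erefl)) lax_unit //.
  have [e1 e2] := lax_cell HL h2 h3 hF.
  rewrite hcomp_id2; last first.
    by rewrite (proj1 (lax_arrow HL h3 Frs)) (proj2 (lax_arrow HL h2 Fpr)).
  rewrite -e2 vcomp_id2l.
  have -> : O p = src (s2 (T s r p)) by rewrite e1 (proj1 (lax_arrow HL h23 hF)).
  by rewrite hcomp_id1r -e1 vcomp_id2r.
case: (eqVneq q r) => [eqr|nqr].
  subst r; rewrite (lax_normal HL h1 (leqnn q) Fpq (or_intror erefl)).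
  by rewrite (lax_normal HL (leqnn q) h3 Fqs (or_introl erefl)).
case: (eqVneq r s) => [ers|nrs].
  subst s; rewrite (lax_normal HL h12 (leqnn r) hF (or_intror erefl)).
  rewrite (lax_normal HL h2 (leqnn r) Fqr (or_intror erefl)) lax_unit //.
  have [e1 e2] := lax_cell HL h1 h2 hF.
  rewrite hcomp_id2; last first.
    by rewrite (proj1 (lax_arrow HL h2 Fqr)) (proj2 (lax_arrow HL h1 Fpq)).
  rewrite -e2 vcomp_id2l.
  have -> : O r = tgt (s2 (T r q p)) by rewrite e1 (proj2 (lax_arrow HL h12 hF)).
  by rewrite hcomp_id1l -e1 vcomp_id2r.
by apply: lax_cocycle; rewrite // ltn_neqAle ?npq ?nqr ?nrs.
Qed.

Lemma of_skel_simplex m (f : 'I_m.+1 -> 'I_n.+1) :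
  (forall i i' : 'I_m.+1, i <= i' -> f i <= f i') -> spanF j (f ord0) (f ord_max) ->
  is_simplex (of_skel f).
Proof.
move=> fmono hF.
have fF (i i' : 'I_m.+1) : spanF j (f i) (f i').
  exact: spanFW hF (fmono ord0 i (leq0n _)) (fmono i' ord_max (leq_ord i')).
rewrite /is_simplex /of_skel /=.
split; [|split; [|split; [|split; [|split; [|split]]]]].
- by move=> i i' h; rewrite h; apply: lax_arrow => //; exact: fmono.
- by move=> i; rewrite leqnn lax_unit.
- move=> i i' l h1 h2; rewrite h1 h2 (leq_trans h1 h2) /=.
  by apply: lax_cell => //; exact: fmono.
- move=> i i' l h1 h2 e; rewrite h1 h2 (leq_trans h1 h2) /=.
  by apply: lax_normal => //; [exact: fmono | exact: fmono | case: e => ->; [left|right]].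
- move=> i i' i'' l h1 h2 h3.
  have h1' := ltnW h1; have h2' := ltnW h2; have h3' := ltnW h3.
  rewrite h1' h2' h3' (leq_trans h1' h2') (leq_trans h2' h3') /=.
  by apply: lax_cocycle_le => //; exact: fmono.
- by move=> i i' h; rewrite leqNgt h.
- by move=> i i' l /negbTE ->.
Qed.

Lemma of_skel_restr m m' (f : 'I_m.+1 -> 'I_n.+1) (b : mono m' m) :
  (forall i i' : 'I_m.+1, i <= i' -> f i <= f i') ->
  of_skel (fun t => f (sval b t)) = restr (of_skel f) b.
Proof.
move=> fm; rewrite /of_skel /restr /=; congr SData.
  do 2 apply: functional_extensionality => ?.
  by case: ifP => // h; rewrite (proj2_sig b _ _ h).
do 3 apply: functional_extensionality => ?.
by case: ifP => // /andP [h1 h2]; rewrite (proj2_sig b _ _ h1) (proj2_sig b _ _ h2).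
Qed.

Definition skel_nerve_map : nerve_map C n j :=
  @NMap C n j (fun m a _ => of_skel (sval a))
    (fun m a Ha => of_skel_simplex (proj2_sig a) Ha)
    (fun m m' a b _ _ => of_skel_restr b (proj2_sig a)).

End LaxSkeleton.

Section NerveMapSkeleton.
Variables (C : TwoCat) (n j : nat) (o0 : Ob C).

(* [o0] only provides junk values for simplices outside [F_j Delta^n]. *)
Definition nm_tot (w : nerve_map C n j) m (a : mono m n) : sdata C m :=
  match @idP (inF j a) with
  | ReflectT Ha => nm w Ha
  | ReflectF _ => SData (fun _ => o0) (fun _ _ => id1 o0) (fun _ _ _ => id2 (id1 o0))
  end.

Lemma nm_totE w m (a : mono m n) (Ha : inF j a) : nm_tot w a = nm w Ha.
Proof.
rewrite /nm_tot; destruct (@idP (inF j a)) as [Ha'|nHa]; last by [].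
by rewrite (bool_irrelevance Ha' Ha).
Qed.

Variable w : nerve_map C n j.

Definition skel_ob (p : 'I_n.+1) : Ob C := sob (nm_tot w (mkm (fun _ : 'I_1 => p))) ord0.
Definition skel_ar (q p : 'I_n.+1) : Ar C := sar (nm_tot w (mkm (edge_fun p q))) ord_max ord0.
Definition skel_cl (r q p : 'I_n.+1) : Cell C :=
  scl (nm_tot w (mkm (tri_fun p q r))) ord_max (Ordinal (isT : 1 < 3)) ord0.

Lemma nm_tot_face m m' (a : mono m n) (b : mono m' m) (Ha : inF j a) f :
  (forall t, f t = sval a (sval b t)) -> nm_tot w (mkm f) = restr (nm w Ha) b.
Proof.
move=> ef.
have -> : mkm f = mcomp a b.
  apply: mono_eq => t /=; rewrite mkmE ?ef //.
  move=> s t' h; rewrite !ef; apply: (proj2_sig a); exact: (proj2_sig b).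
rewrite (nm_totE w (inF_mcomp b Ha)); exact: nm_nat.
Qed.

Lemma nm_skel m (a : mono m n) (Ha : inF j a) :
  nm w Ha = of_skel skel_ob skel_ar skel_cl (sval a).
Proof.
have [_ [_ [_ [_ [_ [J1 J2]]]]]] := nm_simplex w Ha.
have Eo i : skel_ob (sval a i) = sob (nm w Ha) i.
  rewrite /skel_ob (nm_tot_face (b := mkm (fun _ : 'I_1 => i)) Ha) /=.
    by rewrite mkmE.
  by move=> t; rewrite mkmE.
rewrite [LHS](_ : _ = SData (sob (nm w Ha)) (sar (nm w Ha)) (scl (nm w Ha)));
  last by case: (nm w Ha).
rewrite /of_skel; congr SData.
- by apply: functional_extensionality => i.
- apply: functional_extensionality => i'; apply: functional_extensionality => i.
  case: leqP => h; last by rewrite J1 // Eo.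
  rewrite /skel_ar (nm_tot_face (b := mkm (edge_fun i i')) Ha) /=.
    by rewrite mkmE //; exact: edge_fun_mono.
  by move=> t; rewrite mkmE //; [case: t => [[|[|?]] ?] | exact: edge_fun_mono].
- apply: functional_extensionality => l; apply: functional_extensionality => i';
  apply: functional_extensionality => i.
  case: ifP => h; last by rewrite J2 ?h // Eo.
  case/andP: h => h1 h2.
  rewrite /skel_cl (nm_tot_face (b := mkm (tri_fun i i' l)) Ha) /=.
    by rewrite mkmE //; exact: tri_fun_mono.
  by move=> t; rewrite mkmE //; [case: t => [[|[|[|?]]] ?] | exact: tri_fun_mono].
Qed.

Lemma skel_simplex m (f : 'I_m.+1 -> 'I_n.+1) :
  (forall i i' : 'I_m.+1, i <= i' -> f i <= f i') -> spanF j (f ord0) (f ord_max) ->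
  is_simplex (of_skel skel_ob skel_ar skel_cl f).
Proof.
move=> fm hF; have Ha := inF_mkm fm hF.
by have := nm_simplex w Ha; rewrite nm_skel mkmE.
Qed.

Lemma skel_lax : j <= n -> is_lax_skeleton j skel_ob skel_ar skel_cl.
Proof.
move=> jn; split.
- move=> p q h hF; have [S _] := skel_simplex (edge_fun_mono h) hF.
  exact: S ord0 ord_max isT.
- move=> p; have hF : spanF j p p by rewrite /spanF; lia.
  have [_ [S _]] := skel_simplex (f := fun _ : 'I_1 => p) (fun _ _ _ => leqnn p) hF.
  exact: S ord0.
- move=> p q r h1 h2 hF; have [_ [_ [S _]]] := skel_simplex (tri_fun_mono h1 h2) hF.
  exact: S ord0 (Ordinal (isT : 1 < 3)) ord_max isT isT.
- move=> p q r h1 h2 hF [e|e]; subst q.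
    have [_ [_ [_ [S _]]]] := skel_simplex (edge_fun_mono h2) hF.
    exact: S ord0 ord0 ord_max isT isT (or_introl erefl).
  have [_ [_ [_ [S _]]]] := skel_simplex (edge_fun_mono h1) hF.
  exact: S ord0 ord_max ord_max isT isT (or_intror erefl).
- move=> p q r s h1 h2 h3 hF.
  have [_ [_ [_ [_ [S _]]]]] := skel_simplex (tet_fun_mono (ltnW h1) (ltnW h2) (ltnW h3)) hF.
  exact: S ord0 (Ordinal (isT : 1 < 4)) (Ordinal (isT : 2 < 4)) ord_max isT isT isT.
Qed.

End NerveMapSkeleton.

Section SkeletonNerveMap.
Variables (C : TwoCat) (n j : nat) (o0 : Ob C).

Lemma nerve_map_skel_eq (u w : nerve_map C n j) :
  skel_ob o0 u =1 skel_ob o0 w ->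
  (forall p q : 'I_n.+1, p <= q -> spanF j p q -> skel_ar o0 u q p = skel_ar o0 w q p) ->
  (forall p q r : 'I_n.+1, p <= q -> q <= r -> spanF j p r ->
     skel_cl o0 u r q p = skel_cl o0 w r q p) ->
  u = w.
Proof.
move=> Eo Ea Ec; apply: nerve_map_eq => m a Ha.
have am := proj2_sig a.
rewrite !(nm_skel o0) /of_skel; congr SData.
- by apply: functional_extensionality => i.
- apply: functional_extensionality => i'; apply: functional_extensionality => i.
  by case: ifP => h; rewrite ?Eo // Ea ?am ?spanF_mono.
- apply: functional_extensionality => l; apply: functional_extensionality => i';
  apply: functional_extensionality => i.
  case: ifP => [/andP [h1 h2]|_]; rewrite ?Eo // Ec ?am //.
  exact: spanF_mono (leq_trans h1 h2).
Qed.

Variables (O : 'I_n.+1 -> Ob C) (A : 'I_n.+1 -> 'I_n.+1 -> Ar C)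
  (T : 'I_n.+1 -> 'I_n.+1 -> 'I_n.+1 -> Cell C) (HL : is_lax_skeleton j O A T).

Lemma skel_ob_nerve (p : 'I_n.+1) : spanF j p p -> skel_ob o0 (skel_nerve_map HL) p = O p.
Proof.
move=> hF; have Ha := inF_mkm (f := fun _ : 'I_1 => p) (fun _ _ _ => leqnn p) hF.
by rewrite /skel_ob (nm_totE _ _ Ha) /= mkmE.
Qed.

Lemma skel_ar_nerve (p q : 'I_n.+1) : p <= q -> spanF j p q ->
  skel_ar o0 (skel_nerve_map HL) q p = A q p.
Proof.
move=> h hF; have Ha := inF_mkm (edge_fun_mono h) hF.
by rewrite /skel_ar (nm_totE _ _ Ha) /= mkmE //; exact: edge_fun_mono.
Qed.

Lemma skel_cl_nerve (p q r : 'I_n.+1) : p <= q -> q <= r -> spanF j p r ->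
  skel_cl o0 (skel_nerve_map HL) r q p = T r q p.
Proof.
move=> h1 h2 hF; have Ha := inF_mkm (tri_fun_mono h1 h2) hF.
by rewrite /skel_cl (nm_totE _ _ Ha) /= mkmE //; exact: tri_fun_mono.
Qed.

End SkeletonNerveMap.

Lemma whiskerl_vcomp (C : TwoCat) (f : Ar C) (b a : Cell C) :
  s2 b = t2 a -> src f = tgt (s2 a) ->
  vcomp (hcomp (id2 f) b) (hcomp (id2 f) a) = hcomp (id2 f) (vcomp b a).
Proof.
move=> h1 h2; rewrite -interchange ?s2_id2 ?t2_id2 //.
by have := vcomp_id2l (id2 f); rewrite t2_id2 => ->.
Qed.

Lemma whiskerr_vcomp (C : TwoCat) (f : Ar C) (b a : Cell C) :
  s2 b = t2 a -> src (s2 a) = tgt f ->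
  vcomp (hcomp b (id2 f)) (hcomp a (id2 f)) = hcomp (vcomp b a) (id2 f).
Proof.
move=> h1 h2; rewrite -interchange ?s2_id2 ?t2_id2 //.
by have := vcomp_id2l (id2 f); rewrite t2_id2 => ->.
Qed.

Lemma whisker_exchange (C : TwoCat) (b a : Cell C) : src (s2 b) = tgt (s2 a) ->
  vcomp (hcomp (id2 (t2 b)) a) (hcomp b (id2 (s2 a))) =
  vcomp (hcomp b (id2 (t2 a))) (hcomp (id2 (s2 b)) a).
Proof.
move=> h; rewrite -!interchange ?s2_id2 ?t2_id2 //.
by rewrite vcomp_id2l vcomp_id2r vcomp_id2l vcomp_id2r.
Qed.

Ltac tc := repeat first
 [ rewrite s2_id2 | rewrite t2_id2 | rewrite src_id1 | rewrite tgt_id1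
 | match goal with
   | |- context [s2 (hcomp ?b ?a)] => rewrite (@s2_hcomp _ b a); [|by tc]
   | |- context [t2 (hcomp ?b ?a)] => rewrite (@t2_hcomp _ b a); [|by tc]
   | |- context [s2 (vcomp ?b ?a)] => rewrite (@s2_vcomp _ b a); [|by tc]
   | |- context [t2 (vcomp ?b ?a)] => rewrite (@t2_vcomp _ b a); [|by tc]
   | |- context [src (comp ?g ?f)] => rewrite (@src_comp _ g f); [|by tc]
   | |- context [tgt (comp ?g ?f)] => rewrite (@tgt_comp _ g f); [|by tc]
   | H : s2 ?x = _ |- context [s2 ?x] => rewrite H
   | H : t2 ?x = _ |- context [t2 ?x] => rewrite H
   | H : src ?x = _ |- context [src ?x] => rewrite H
   | H : tgt ?x = _ |- context [tgt ?x] => rewrite H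
   end ].

Definition vinverse (C : TwoCat) (inv : Cell C -> Cell C) : Prop :=
  forall a, [/\ s2 (inv a) = t2 a, t2 (inv a) = s2 a,
               vcomp (inv a) a = id2 (s2 a) & vcomp a (inv a) = id2 (t2 a)].

Lemma cells_invertible_vinverse (C : TwoCat) :
  cells_invertible C -> {inv : Cell C -> Cell C | vinverse inv}.
Proof.
move=> H; exists (fun a => sval (constructive_indefinite_description _ (H a))) => a.
exact: svalP (constructive_indefinite_description _ (H a)).
Qed.

Section InvertibleCells.
Variables (C : TwoCat) (inv : Cell C -> Cell C).
Hypothesis invP : vinverse inv.

Lemma vcomp_invK (w y : Cell C) : s2 w = t2 y -> vcomp (inv w) (vcomp w y) = y.
Proof.
by case: (invP w) => ? ? invl _ h; rewrite vcompA ?h // invl h vcomp_id2l.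
Qed.

Lemma vcomp_Kinv (w z : Cell C) : t2 z = t2 w -> vcomp w (vcomp (inv w) z) = z.
Proof.
by case: (invP w) => ? ? _ invr h; rewrite vcompA ?h // invr -h vcomp_id2l.
Qed.

Lemma s2_vcomp_inv (w z : Cell C) : t2 z = t2 w -> s2 (vcomp (inv w) z) = s2 z.
Proof. by case: (invP w) => ? ? _ _ h; rewrite s2_vcomp ?h. Qed.

Lemma t2_vcomp_inv (w z : Cell C) : t2 z = t2 w -> t2 (vcomp (inv w) z) = s2 w.
Proof. by case: (invP w) => ? ? _ _ h; rewrite t2_vcomp ?h. Qed.

Lemma vcomp_injl (w y y' : Cell C) : s2 w = t2 y -> s2 w = t2 y' ->
  vcomp w y = vcomp w y' -> y = y'.
Proof. by move=> h h' e; rewrite -(vcomp_invK h) e vcomp_invK. Qed.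

Lemma cocycle_0234 (I : Type) (O : I -> Ob C) (A : I -> I -> Ar C)
    (T : I -> I -> I -> Cell C) (c : nat -> I) :
  (forall i i', i <= i' <= 4 ->
     src (A (c i') (c i)) = O (c i) /\ tgt (A (c i') (c i)) = O (c i')) ->
  (forall i i' i'', i <= i' <= i'' -> i'' <= 4 ->
     s2 (T (c i'') (c i') (c i)) = A (c i'') (c i) /\
     t2 (T (c i'') (c i') (c i)) = comp (A (c i'') (c i')) (A (c i') (c i))) ->
  cocycle A T (c 0) (c 1) (c 2) (c 3) -> cocycle A T (c 0) (c 1) (c 2) (c 4) ->
  cocycle A T (c 0) (c 1) (c 3) (c 4) -> cocycle A T (c 1) (c 2) (c 3) (c 4) ->
  cocycle A T (c 0) (c 2) (c 3) (c 4).
Proof.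
move=> Har Hcl C0123 C0124 C0134 C1234.
move: (Har 0 1 isT) (Har 0 2 isT) (Har 0 3 isT) (Har 0 4 isT) (Har 1 2 isT)
  (Har 1 3 isT) (Har 1 4 isT) (Har 2 3 isT) (Har 2 4 isT) (Har 3 4 isT)
  => [? ?] [? ?] [? ?] [? ?] [? ?] [? ?] [? ?] [? ?] [? ?] [? ?].
move: (Hcl 0 1 2 isT isT) (Hcl 0 1 3 isT isT) (Hcl 0 2 3 isT isT)
  (Hcl 1 2 3 isT isT) (Hcl 1 2 4 isT isT) (Hcl 1 3 4 isT isT) (Hcl 2 3 4 isT isT)
  (Hcl 0 1 4 isT isT) (Hcl 0 2 4 isT isT) (Hcl 0 3 4 isT isT)
  => [? ?] [? ?] [? ?] [? ?] [? ?] [? ?] [? ?] [? ?] [? ?] [? ?].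
rewrite /cocycle in C0123 C0124 C0134 C1234 *.
pose W := hcomp (id2 (A (c 4) (c 3))) (hcomp (id2 (A (c 3) (c 2))) (T (c 2) (c 1) (c 0))).
apply: (@vcomp_injl W); rewrite /W; [by tc | by tc; rewrite compA; tc |].
rewrite vcompA; try by tc.
rewrite whiskerl_vcomp; try by tc.
rewrite C0123 -whiskerl_vcomp; try by tc.
rewrite -vcompA; try by tc.
rewrite C0134 vcompA; try by tc.
rewrite hcompA; try by tc.
rewrite whiskerr_vcomp; try by tc.
rewrite C1234 vcompA; try by tc.
have E : vcomp W (hcomp (T (c 4) (c 3) (c 2)) (id2 (A (c 2) (c 0)))) =
    vcomp (hcomp (T (c 4) (c 3) (c 2)) (id2 (comp (A (c 2) (c 1)) (A (c 1) (c 0)))))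
          (hcomp (id2 (A (c 4) (c 2))) (T (c 2) (c 1) (c 0))).
  rewrite /W hcompA ?hcomp_id2; try by tc.
  have e1 : comp (A (c 4) (c 3)) (A (c 3) (c 2)) = t2 (T (c 4) (c 3) (c 2)) by tc.
  have e2 : A (c 2) (c 0) = s2 (T (c 2) (c 1) (c 0)) by tc.
  have e3 : A (c 4) (c 2) = s2 (T (c 4) (c 3) (c 2)) by tc.
  have e4 : comp (A (c 2) (c 1)) (A (c 1) (c 0)) = t2 (T (c 2) (c 1) (c 0)) by tc.
  by rewrite e1 e2 e3 e4 whisker_exchange //; tc.
rewrite /W in E; rewrite E -vcompA; try by tc.
rewrite C0124 vcompA; try by tc.
rewrite -hcomp_id2; try by tc.
rewrite hcompA; try by tc.
rewrite whiskerr_vcomp; try by tc.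
all: by tc; rewrite compA; tc.
Qed.

End InvertibleCells.

Section Restriction.
Variables (C : TwoCat) (n : nat) (k : 'I_n) (o0 : Ob C).

Local Notation K1 := (vkm1 k).
Local Notation K := (vk k).
Local Notation N := (vn n).

Lemma k_le_n : k <= n.
Proof. exact: ltnW (ltn_ord k). Qed.

Lemma skel_ob_resK (u : nerve_map C n k.-1) (p : 'I_n.+1) :
  skel_ob o0 (resK u) p = skel_ob o0 u p.
Proof.
have Ha : inF k (mkm (fun _ : 'I_1 => p)).
  by rewrite /inF mkmE //= /spanF; have := k_le_n; lia.
by rewrite /skel_ob (nm_totE _ _ Ha) (nm_totE _ _ (inF_pred Ha)).
Qed.

Lemma skel_ar_resK (u : nerve_map C n k.-1) (p q : 'I_n.+1) : p <= q -> spanF k p q ->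
  skel_ar o0 (resK u) q p = skel_ar o0 u q p.
Proof.
move=> h hF; have Ha := inF_mkm (edge_fun_mono h) hF.
by rewrite /skel_ar (nm_totE _ _ Ha) (nm_totE _ _ (inF_pred Ha)).
Qed.

Lemma skel_cl_resK (u : nerve_map C n k.-1) (p q r : 'I_n.+1) :
  p <= q -> q <= r -> spanF k p r -> skel_cl o0 (resK u) r q p = skel_cl o0 u r q p.
Proof.
move=> h1 h2 hF; have Ha := inF_mkm (tri_fun_mono h1 h2) hF.
by rewrite /skel_cl (nm_totE _ _ Ha) (nm_totE _ _ (inF_pred Ha)).
Qed.

Lemma phi_skel (w : nerve_map C n k) :
  phi w = comp (skel_ar o0 w N K) (skel_ar o0 w K K1).
Proof. by rewrite /phi !(nm_skel o0). Qed.

Lemma cell_nkkm1_skel (u : nerve_map C n k.-1) : cell_nkkm1 u = skel_cl o0 u N K K1.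
Proof. by rewrite /cell_nkkm1 (nm_skel o0). Qed.

End Restriction.

Lemma phi_resK (C : TwoCat) (n : nat) (k : 'I_n) (u : nerve_map C n k.-1) :
  phi (resK u) = t2 (cell_nkkm1 u).
Proof.
pose o0 := sob (nm u (tri_kn_in k)) ord0.
have hF : spanF k.-1 (vkm1 k) (vn n) by rewrite /spanF leqnn orbT.
rewrite (phi_skel o0) (cell_nkkm1_skel o0).
have [_ ->] := lax_cell (skel_lax o0 u (leq_trans (leq_pred k) (k_le_n k)))
  (le_km1_k k) (le_k_n k) hF.
by rewrite !skel_ar_resK ?le_k_n ?le_km1_k // /spanF /= ?leqnn ?orbT ?ltn_ord.
Qed.

Section Extension.
Variables (C : TwoCat) (n : nat) (k : 'I_n).
Hypothesis k_gt0 : 0 < k.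
Variable inv : Cell C -> Cell C.
Hypothesis invP : vinverse inv.
Variables (o0 : Ob C) (v : nerve_map C n k) (x : Cell C).
Hypothesis phi_v : phi v = t2 x.

Local Notation K1 := (vkm1 k).
Local Notation K := (vk k).
Local Notation N := (vn n).
Local Notation Ov := (skel_ob o0 v).
Local Notation Av := (skel_ar o0 v).
Local Notation Tv := (skel_cl o0 v).

Lemma v_lax : is_lax_skeleton k Ov Av Tv.
Proof. exact: skel_lax (k_le_n k). Qed.

Lemma spanF_pred (p s : 'I_n.+1) :
  spanF k.-1 p s = ((p == K1) && (s == N)) || spanF k p s.
Proof.
rewrite /spanF -!val_eqE /=; have := ltn_ord s; have := ltn_ord k; lia.
Qed.

Lemma spanF_K1N_false (p s : 'I_n.+1) : spanF k p s -> (p == K1) && (s == N) = false.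
Proof. rewrite /spanF -!val_eqE /=; have := ltn_ord s; lia. Qed.

Lemma spanF_ge (p s : 'I_n.+1) : k <= p -> spanF k p s.
Proof. by rewrite /spanF => ->; rewrite orbT. Qed.

Lemma spanF_lt (p s : 'I_n.+1) : s < n -> spanF k p s.
Proof. by rewrite /spanF => ->. Qed.

Lemma K1_cases (q : 'I_n.+1) : K1 <= q ->
  [\/ q = K1, q = N, q = K | (k < q) && (q < n)].
Proof.
move=> h; case: (eqVneq q K1) => [->|h1]; first by constructor 1.
case: (eqVneq q N) => [->|h2]; first by constructor 2.
case: (eqVneq q K) => [->|h3]; first by constructor 3.
constructor 4; move: h h1 h2 h3; rewrite -!val_eqE /=.
have := ltn_ord q; lia.
Qed.

Lemma t2_x : t2 x = comp (Av N K) (Av K K1).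
Proof. by rewrite -phi_v (phi_skel o0). Qed.

(* The value of [u_{n,q,k-1}], [k < q < n], forced by the cocycle condition on
   [(k-1,k,q,n)]. *)
Definition fill (q : 'I_n.+1) : Cell C :=
  vcomp (inv (hcomp (id2 (Av N q)) (Tv q K K1)))
        (vcomp (hcomp (Tv N q K) (id2 (Av K K1))) x).

Definition ext_ar (q p : 'I_n.+1) : Ar C :=
  if (p == K1) && (q == N) then s2 x else Av q p.

Definition ext_cl (r q p : 'I_n.+1) : Cell C :=
  if (p == K1) && (r == N) then
    if (q == p) || (q == r) then id2 (s2 x) else if q == K then x else fill q
  else Tv r q p.

Lemma ext_ar_skel (p q : 'I_n.+1) : spanF k p q -> ext_ar q p = Av q p.
Proof. by move=> h; rewrite /ext_ar spanF_K1N_false. Qed.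

Lemma ext_cl_skel (p q r : 'I_n.+1) : spanF k p r -> ext_cl r q p = Tv r q p.
Proof. by move=> h; rewrite /ext_cl spanF_K1N_false. Qed.

Lemma ext_ar_K1N : ext_ar N K1 = s2 x.
Proof. by rewrite /ext_ar !eqxx. Qed.

Lemma ext_cl_K : ext_cl N K K1 = x.
Proof.
rewrite /ext_cl !eqxx /=.
have /negbTE -> : K != K1 by rewrite -val_eqE /=; lia.
by have /negbTE -> : K != N by rewrite -val_eqE /=; have := ltn_ord k; lia.
Qed.

Lemma ext_cl_K1 : ext_cl N K1 K1 = id2 (s2 x).
Proof. by rewrite /ext_cl !eqxx. Qed.

Lemma ext_cl_N : ext_cl N N K1 = id2 (s2 x).
Proof. by rewrite /ext_cl !eqxx orbT. Qed.

Lemma ext_cl_fill (q : 'I_n.+1) : k < q < n -> ext_cl N q K1 = fill q.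
Proof.
move=> /andP [kq qn]; rewrite /ext_cl !eqxx /=.
have /negbTE -> : q != K1 by rewrite -val_eqE /=; lia.
have /negbTE -> : q != N by rewrite -val_eqE /=; lia.
by have /negbTE -> : q != K by rewrite -val_eqE /=; lia.
Qed.

Lemma spanF_K1K : spanF k K1 K.
Proof. by rewrite /spanF /= ltn_ord. Qed.

Lemma spanF_K (s : 'I_n.+1) : spanF k K s.
Proof. by rewrite /spanF leqnn orbT. Qed.

Lemma spanF_K1N : spanF k.-1 K1 N.
Proof. by rewrite /spanF leqnn orbT. Qed.

Lemma K1_lt_K : K1 < K.
Proof. by rewrite /=; lia. Qed.

Lemma spanF_refl (p : 'I_n.+1) : spanF k p p.
Proof. rewrite /spanF; have := ltn_ord k; have := ltn_ord p; lia. Qed.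

Lemma src_tgt_s2x : src (s2 x) = Ov K1 /\ tgt (s2 x) = Ov N.
Proof.
have [? ?] := lax_arrow v_lax (le_km1_k k) spanF_K1K.
have [? ?] := lax_arrow v_lax (le_k_n k) (spanF_K N).
have tx := t2_x; rewrite src_s2t2 tgt_s2t2; by split; tc.
Qed.

Lemma fill_spec (q : 'I_n.+1) : k < q < n ->
  [/\ t2 (vcomp (hcomp (Tv N q K) (id2 (Av K K1))) x) =
      t2 (hcomp (id2 (Av N q)) (Tv q K K1)),
      s2 (fill q) = s2 x & t2 (fill q) = comp (Av N q) (Av q K1)].
Proof.
move=> /andP [kq qn].
have [? ?] := lax_arrow v_lax (le_km1_k k) spanF_K1K.
have [? ?] := lax_arrow v_lax (le_k_n k) (spanF_K N).
have [? ?] := lax_arrow v_lax (ltnW kq : K <= q) (spanF_K q).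
have [? ?] := lax_arrow v_lax (leq_ord q : q <= N) (spanF_ge N (ltnW kq)).
have [? ?] := lax_arrow v_lax (leq_trans (le_km1_k k) (ltnW kq)) (spanF_lt K1 qn).
have [? ?] := lax_cell v_lax (le_km1_k k) (ltnW kq : K <= q) (spanF_lt K1 qn).
have [? ?] := lax_cell v_lax (ltnW kq : K <= q) (leq_ord q : q <= N) (spanF_K N).
have tx := t2_x.
have e : t2 (vcomp (hcomp (Tv N q K) (id2 (Av K K1))) x) =
         t2 (hcomp (id2 (Av N q)) (Tv q K K1)).
  by tc; rewrite compA; tc.
by rewrite /fill (s2_vcomp_inv invP) // (t2_vcomp_inv invP) //; split=> //; tc.
Qed.

Lemma ext_cocycle_skel (p q r s : 'I_n.+1) : p <= q -> q <= r -> r <= s ->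
  spanF k p s -> cocycle ext_ar ext_cl p q r s = cocycle Av Tv p q r s.
Proof.
move=> h1 h2 h3 hF; rewrite /cocycle.
by rewrite !ext_cl_skel ?ext_ar_skel //; apply: spanFW hF _ _; lia.
Qed.

Lemma fill_cocycle (q : 'I_n.+1) : k < q < n -> cocycle ext_ar ext_cl K1 K q N.
Proof.
move=> hq; case/andP: (hq) => kq qn; have [e _ _] := fill_spec hq.
rewrite /cocycle ext_cl_fill // ext_cl_K !ext_ar_skel ?ext_cl_skel ?spanF_K //.
- exact: (vcomp_Kinv invP).
all: by rewrite /spanF /=; have := ltn_ord k; lia.
Qed.

Lemma ext_arrow (p q : 'I_n.+1) : p <= q -> spanF k.-1 p q ->
  src (ext_ar q p) = Ov p /\ tgt (ext_ar q p) = Ov q.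
Proof.
move=> h; rewrite spanF_pred => /orP [/andP [/eqP -> /eqP ->]|hF].
  by rewrite ext_ar_K1N; exact: src_tgt_s2x.
by rewrite ext_ar_skel //; exact: (lax_arrow v_lax h hF).
Qed.

Lemma ext_unit (p : 'I_n.+1) : ext_ar p p = id1 (Ov p).
Proof. by rewrite ext_ar_skel ?spanF_refl // (lax_unit v_lax). Qed.

Lemma ext_cell (p q r : 'I_n.+1) : p <= q -> q <= r -> spanF k.-1 p r ->
  s2 (ext_cl r q p) = ext_ar r p /\ t2 (ext_cl r q p) = comp (ext_ar r q) (ext_ar q p).
Proof.
move=> h1 h2; rewrite spanF_pred => /orP [/andP [/eqP ep /eqP er]|hF]; last first.
  rewrite ext_cl_skel // !ext_ar_skel; first exact: (lax_cell v_lax h1 h2 hF).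
  - exact: spanFW hF (leqnn p) h2.
  - exact: spanFW hF h1 (leqnn r).
  - exact: hF.
subst p r; rewrite ext_ar_K1N; have [sx tx] := src_tgt_s2x.
case: (K1_cases h1) => [->|->|->|hq].
- by rewrite ext_cl_K1 ext_unit ext_ar_K1N -sx comp_id1r s2_id2 t2_id2.
- by rewrite ext_cl_N ext_unit ext_ar_K1N -tx comp_id1l s2_id2 t2_id2.
- by rewrite ext_cl_K !ext_ar_skel ?spanF_K1K ?spanF_K // -t2_x.
have [_ s2f t2f] := fill_spec hq; case/andP: hq => kq qn.
rewrite ext_cl_fill ?kq // s2f t2f !ext_ar_skel //.
  exact: spanF_lt.
exact: spanF_ge (ltnW kq).
Qed.

Lemma ext_normal (p q r : 'I_n.+1) : p <= q -> q <= r -> spanF k.-1 p r ->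
  (p = q \/ q = r) -> ext_cl r q p = id2 (ext_ar r p).
Proof.
move=> h1 h2; rewrite spanF_pred => /orP [/andP [/eqP ep /eqP er]|hF] e.
  by subst p r; rewrite ext_ar_K1N; case: e => [<-|->]; rewrite ?ext_cl_K1 ?ext_cl_N.
by rewrite ext_cl_skel // ext_ar_skel //; exact: (lax_normal v_lax h1 h2 hF e).
Qed.

Lemma ext_cocycle_K1N (q r : 'I_n.+1) : k < q -> q < r -> r < n ->
  cocycle ext_ar ext_cl K1 q r N.
Proof.
move=> kq qr rn; have qn := ltn_trans qr rn.
pose c i := nth N [:: K1; K; q; r] i.
have K1c i : K1 <= c i.
  by case: i => [|[|[|[|i]]]]; rewrite /c /= ?nth_nil /=; have := ltn_ord k; lia.
have c_mono i i' : i <= i' -> c i <= c i'.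
  by case: i i' => [|[|[|[|i]]]] [|[|[|[|i']]]] //= _;
    rewrite /c /= ?nth_nil /=; have := ltn_ord k; lia.
have spanFc i i' : spanF k.-1 (c i) (c i') by apply/orP; right; exact: K1c.
apply: (cocycle_0234 invP (c := c)).
- by move=> i i' /andP [h _]; exact: ext_arrow (c_mono _ _ h) (spanFc _ _).
- move=> i i' i'' /andP [h h'] _.
  exact: ext_cell (c_mono _ _ h) (c_mono _ _ h') (spanFc _ _).
- rewrite /c /= ext_cocycle_skel ?(ltnW kq) ?(ltnW qr) ?le_km1_k ?(spanF_lt K1 rn) //.
  exact: (lax_cocycle v_lax K1_lt_K (kq : K < q) qr (spanF_lt K1 rn)).
- by rewrite /c /=; apply: fill_cocycle; rewrite kq qn.
- by rewrite /c /=; apply: fill_cocycle; rewrite (ltn_trans kq qr) rn.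
rewrite /c /= ext_cocycle_skel ?(ltnW kq) ?(ltnW qr) ?(ltnW rn) ?spanF_K //.
exact: (lax_cocycle v_lax (kq : K < q) qr (rn : r < N) (spanF_K N)).
Qed.

Lemma ext_cocycle (p q r s : 'I_n.+1) : p < q -> q < r -> r < s -> spanF k.-1 p s ->
  cocycle ext_ar ext_cl p q r s.
Proof.
move=> h1 h2 h3; rewrite spanF_pred => /orP [/andP [/eqP ep /eqP es]|hF]; last first.
  rewrite ext_cocycle_skel ?(ltnW h1) ?(ltnW h2) ?(ltnW h3) //.
  exact: (lax_cocycle v_lax h1 h2 h3 hF).
subst p s; have rn : r < n by [].
case: (K1_cases (ltnW h1)) => [eq|eq|eq|/andP [kq _]]; try subst q.
- by rewrite ltnn in h1.
- by move: h2 => /=; have := ltn_ord r; lia.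
- by apply: fill_cocycle; rewrite h2 rn.
exact: ext_cocycle_K1N.
Qed.

Lemma ext_lax : is_lax_skeleton k.-1 Ov ext_ar ext_cl.
Proof.
split; [exact: ext_arrow | exact: ext_unit | exact: ext_cell | exact: ext_normal |
        exact: ext_cocycle].
Qed.

Definition ext_map : nerve_map C n k.-1 := skel_nerve_map ext_lax.

Lemma resK_ext_map : resK ext_map = v.
Proof.
have spanF_ext (p s : 'I_n.+1) : spanF k p s -> spanF k.-1 p s.
  by move=> h; rewrite spanF_pred h orbT.
apply: (nerve_map_skel_eq (o0 := o0)) => [p|p q h hF|p q r h1 h2 hF].
- by rewrite skel_ob_resK skel_ob_nerve // spanF_ext ?spanF_refl.
- by rewrite skel_ar_resK // skel_ar_nerve ?spanF_ext // ext_ar_skel.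
- by rewrite skel_cl_resK // skel_cl_nerve ?spanF_ext // ext_cl_skel.
Qed.

Lemma ext_map_cell : cell_nkkm1 ext_map = x.
Proof.
by rewrite (cell_nkkm1_skel o0) skel_cl_nerve ?le_km1_k ?le_k_n ?spanF_K1N ?ext_cl_K.
Qed.

Section Uniqueness.
Variable u : nerve_map C n k.-1.
Hypotheses (u_res : resK u = v) (u_cell : cell_nkkm1 u = x).

Local Notation Au := (skel_ar o0 u).
Local Notation Tu := (skel_cl o0 u).

Lemma u_lax : is_lax_skeleton k.-1 (skel_ob o0 u) Au Tu.
Proof. exact: skel_lax (leq_trans (leq_pred k) (k_le_n k)). Qed.

Lemma skel_ar_u (p q : 'I_n.+1) : p <= q -> spanF k p q -> Au q p = Av q p.
Proof. by move=> h hF; rewrite -u_res skel_ar_resK. Qed.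

Lemma skel_cl_u (p q r : 'I_n.+1) : p <= q -> q <= r -> spanF k p r ->
  Tu r q p = Tv r q p.
Proof. by move=> h1 h2 hF; rewrite -u_res skel_cl_resK. Qed.

Lemma skel_cl_u_K : Tu N K K1 = x.
Proof. by rewrite -(cell_nkkm1_skel o0) u_cell. Qed.

Lemma skel_ar_u_ext (p q : 'I_n.+1) : p <= q -> spanF k.-1 p q -> Au q p = ext_ar q p.
Proof.
move=> h; rewrite spanF_pred => /orP [/andP [/eqP -> /eqP ->]|hF].
  have [<- _] := lax_cell u_lax (le_km1_k k) (le_k_n k) spanF_K1N.
  by rewrite skel_cl_u_K ext_ar_K1N.
by rewrite ext_ar_skel // skel_ar_u.
Qed.

Lemma skel_cl_u_fill (q : 'I_n.+1) : k < q < n -> Tu N q K1 = fill q.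
Proof.
move=> /andP [kq qn]; have hKq : K <= q := ltnW kq; have hqN : q <= N := leq_ord q.
have hK1q : K1 <= q := leq_trans (le_km1_k k) hKq.
have eNq := skel_ar_u hqN (spanF_ge N (ltnW kq)).
have eqK1 := skel_ar_u hK1q (spanF_lt K1 qn).
have eKK1 := skel_ar_u (le_km1_k k) spanF_K1K.
have eqKK1 := skel_cl_u (le_km1_k k) hKq (spanF_lt K1 qn).
have eNqK := skel_cl_u hKq hqN (spanF_K N).
have := lax_cocycle u_lax K1_lt_K (kq : K < q) (qn : q < N) spanF_K1N.
rewrite /cocycle skel_cl_u_K eNq eKK1 eqKK1 eNqK => e.
rewrite /fill -e (vcomp_invK invP) //.
have [_ ->] := lax_cell u_lax hK1q hqN spanF_K1N.
have [? ?] := lax_arrow v_lax hqN (spanF_ge N (ltnW kq)).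
have [? ?] := lax_arrow v_lax hK1q (spanF_lt K1 qn).
have [? ?] := lax_cell v_lax (le_km1_k k) hKq (spanF_lt K1 qn).
by rewrite eNq eqK1; tc.
Qed.

Lemma skel_cl_u_ext (p q r : 'I_n.+1) : p <= q -> q <= r -> spanF k.-1 p r ->
  Tu r q p = ext_cl r q p.
Proof.
move=> h1 h2; rewrite spanF_pred => /orP [/andP [/eqP ep /eqP er]|hF]; last first.
  by rewrite ext_cl_skel // skel_cl_u.
subst p r; case: (K1_cases h1) => [->|->|->|hq].
- rewrite (lax_normal u_lax (leqnn _) (leq_ord K1 : K1 <= N) spanF_K1N (or_introl erefl)).
  by rewrite skel_ar_u_ext ?ext_ar_K1N ?ext_cl_K1 ?spanF_K1N //; exact: leq_ord.
- rewrite (lax_normal u_lax (leq_ord K1 : K1 <= N) (leqnn _) spanF_K1N (or_intror erefl)).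
  by rewrite skel_ar_u_ext ?ext_ar_K1N ?ext_cl_N ?spanF_K1N //; exact: leq_ord.
- by rewrite skel_cl_u_K ext_cl_K.
by rewrite skel_cl_u_fill // ext_cl_fill.
Qed.

Lemma ext_map_unique : u = ext_map.
Proof.
have u_ob p : skel_ob o0 u p = Ov p by rewrite -u_res skel_ob_resK.
apply: (nerve_map_skel_eq (o0 := o0)) => [p|p q h hF|p q r h1 h2 hF].
- by rewrite skel_ob_nerve ?u_ob // spanF_pred spanF_refl orbT.
- by rewrite skel_ar_nerve // skel_ar_u_ext.
- by rewrite skel_cl_nerve // skel_cl_u_ext.
Qed.

End Uniqueness.

End Extension.

Theorem mainTheorem6 (C : TwoCat) (n : nat) (k : 'I_n) :
  cells_invertible C -> 2 <= n -> 1 <= k ->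
  (forall u : nerve_map C n k.-1, phi (resK u) = t2 (cell_nkkm1 u)) /\
  (forall (v : nerve_map C n k) (a : Cell C), phi v = t2 a ->
     exists! u : nerve_map C n k.-1, resK u = v /\ cell_nkkm1 u = a).
Proof.
move=> /cells_invertible_vinverse [inv invP] _ k_gt0; split; first exact: phi_resK.
move=> v a phi_v; pose o0 := sob (nm v (edge_kn_in k)) ord0.
exists (ext_map k_gt0 invP o0 phi_v); split.
  by split; [exact: resK_ext_map | exact: ext_map_cell].
by move=> u [u_res u_cell]; rewrite (ext_map_unique k_gt0 invP o0 phi_v u_res u_cell).
Qed.
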